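(* Let $p\neq 2$ be a prime and $G=Z_{p^{\lambda_1}}\times\cdots\times Z_{p^{\lambda_n}}$ with $0<\lambda_1<\cdots<\lambda_n$. Let $i\in\{1,\dots,n\}$, $j\in\{1,\dots,\lambda_i\}$, and write $J(i,j)=R(\mathbf a)$ as in its definition. Then the number of elements of $J(G)$ contained in $J(i,j)$ is $\sum_{k=1}^n a_k$.
   Context: Tuples are ordered componentwise; for $\mathbf 0\le\mathbf a\le(\lambda_1,\dots,\lambda_n)$, $T(\mathbf a)$ is the set of $(g_1,\dots,g_n)\in G$ with $|g_i|=p^{a_i}$, and $R(\mathbf a)=\bigcup_{\mathbf b\le\mathbf a}T(\mathbf b)$. For $i\in\{1,\dots,n\}$ and $j\in\{1,\dots,\lambda_i\}$, $J(i,j)=R(\mathbf a)$ where $a_k=j$ for $k\ge i$ and $a_k=\max\{0,\,j-(\lambda_i-\lambda_k)\}$ for $k<i$. $J(G)$ is the set of all $J(i,j)$, partially ordered by inclusion. *)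

From mathcomp Require Import all_boot all_order all_algebra all_fingroup.
Set Implicit Arguments. Unset Strict Implicit. Unset Printing Implicit Defensive.

(* Indices 1..n of the paper are represented by 'I_n (0-based). *)
Definition Gt (p n : nat) (lam : 'I_n -> nat) : finType :=
  {dffun forall k : 'I_n, 'Z_(p ^ lam k)}.

Section Defs.
Variables (p n : nat) (lam : 'I_n -> nat).

Definition Tset (a : 'I_n -> nat) : {set Gt p lam} :=
  [set g : Gt p lam | [forall k, #[g k]%g == p ^ a k]].

(* bound used to range over all tuples b with 0 <= b <= a *)
Definition bnd (a : 'I_n -> nat) : nat := (\max_(k < n) a k).+1.

Definition Rset (a : 'I_n -> nat) : {set Gt p lam} :=
  \bigcup_(b : {ffun 'I_n -> 'I_(bnd a)} | [forall k, (b k <= a k)%N])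
     Tset (fun k => nat_of_ord (b k)).

(* the tuple a defining J(i,j); truncated subtraction realizes max{0, .} *)
Definition Jvec (i : 'I_n) (j : nat) (k : 'I_n) : nat :=
  if (i <= k)%N then j else (j - (lam i - lam k))%N.

Definition Jset (i : 'I_n) (j : nat) : {set Gt p lam} := Rset (Jvec i j).

Definition JG : {set {set Gt p lam}} :=
  \bigcup_(i : 'I_n)
    [set Jset i (nat_of_ord j) | j : 'I_(\max_(k < n) lam k).+1
       & (0 < j <= lam i)%N].

End Defs.

(* Since |g_k| is a power of p, R(a) is the set of tuples with |g_k| dividing
   p^(a_k); every p^e with e <= lam_k is the order of some element of
   Z_{p^lam_k}, so R(a) ⊆ R(b) iff a <= b whenever a <= lam.  For admissible
   (k, t) this turns J(k, t) ⊆ J(i, j) into the single inequality t <= a_k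
   (the defining tuples are nested), and the same criterion applied in both
   directions shows that (k, t) is recovered from J(k, t).  Hence the members
   of J(G) inside J(i, j) correspond to the pairs (k, t) with 0 < t <= a_k. *)
From mathcomp Require Import all_boot all_order all_algebra all_fingroup all_solvable.
From mathcomp Require Import zify.
Set Implicit Arguments. Unset Strict Implicit. Unset Printing Implicit Defensive.

Lemma order_Zp1_expn (p m e : nat) : prime p -> 0 < m -> e <= m ->
  #[(Zp1 : 'Z_(p ^ m)) ^+ (p ^ (m - e))]%g = p ^ e.
Proof.
move=> /prime_gt1 p_gt1 m_gt0 le_em.
have ord_Zp1 : #[(Zp1 : 'Z_(p ^ m))]%g = p ^ m.
  by rewrite order_Zp1 Zp_cast // (leq_trans p_gt1) // -{1}(expn1 p) leq_exp2l.
by rewrite (orderXexp _ ord_Zp1) subKn.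
Qed.

Section ProductOfCyclicGroups.
Variables (p n : nat) (lam : 'I_n -> nat).
Hypothesis p_prime : prime p.

Lemma mem_Rset (a : 'I_n -> nat) (g : Gt p lam) :
  (g \in Rset p lam a) = [forall k, #[g k]%g %| p ^ a k].
Proof.
have p_gt1 := prime_gt1 p_prime.
apply/bigcupP/forallP => [[b /forallP le_ba] | dvd_ga].
  by rewrite inE => /forallP ord_gb k; rewrite (eqP (ord_gb k)) dvdn_Pexp2l.
have [e le_ea ord_ge] : exists2 e : 'I_n -> nat,
    forall k, e k <= a k & forall k, #[g k]%g = p ^ e k.
  exists (fun k => logn p #[g k]%g) => [|] k;
    have /(dvdn_pfactor _ _ p_prime) [c le_ca ->] := dvd_ga k;
    by rewrite pfactorK.
have lt_e_bnd k : e k < bnd a.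
  by rewrite /bnd ltnS (leq_trans (le_ea k)) ?(leq_bigmax k).
exists [ffun k => Ordinal (lt_e_bnd k)].
  by apply/forallP => k; rewrite ffunE le_ea.
by rewrite inE; apply/forallP => k; rewrite ffunE ord_ge.
Qed.

Hypothesis lam_gt0 : forall k, 0 < lam k.

Lemma Rset_subset (a b : 'I_n -> nat) : (forall k, a k <= lam k) ->
  (Rset p lam a \subset Rset p lam b) = [forall k, a k <= b k].
Proof.
move=> le_a_lam; have p_gt1 := prime_gt1 p_prime.
apply/subsetP/forallP => [sub_ab k | le_ab g].
  pose g : Gt p lam := [ffun l => Zp1 ^+ (p ^ (lam l - a l))]%g.
  have ord_g l : #[g l]%g = p ^ a l by rewrite ffunE order_Zp1_expn.
  have /sub_ab : g \in Rset p lam a.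
    by rewrite mem_Rset; apply/forallP => l; rewrite ord_g.
  by rewrite mem_Rset => /forallP/(_ k); rewrite ord_g dvdn_Pexp2l.
rewrite !mem_Rset => /forallP dvd_ga; apply/forallP => k.
by rewrite (dvdn_trans (dvd_ga k)) // dvdn_Pexp2l.
Qed.

End ProductOfCyclicGroups.

Section JvecOrder.
Variables (n : nat) (lam : 'I_n -> nat).
Hypothesis lam_increasing : forall k l : 'I_n, k < l -> lam k < lam l.

Lemma lam_monotone (k l : 'I_n) : k <= l -> lam k <= lam l.
Proof.
rewrite leq_eqVlt => /orP [/eqP/val_inj -> // | /lam_increasing/ltnW //].
Qed.

Ltac case_lam k l :=
  case: (leqP k l) => [/[dup] ? /lam_monotone ? | /[dup] ? /lam_increasing ?].

Lemma Jvec_le_lam (i k : 'I_n) (j : nat) : j <= lam i -> Jvec lam i j k <= lam k.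
Proof. rewrite /Jvec; case_lam i k; lia. Qed.

Lemma Jvec_le_Jvec (i k l : 'I_n) (j t : nat) : j <= lam i ->
  0 < t <= Jvec lam i j k -> Jvec lam k t l <= Jvec lam i j l.
Proof. rewrite /Jvec; case_lam i k; case_lam i l; case_lam k l; lia. Qed.

Lemma Jvec_antisym (k l : 'I_n) (t u : nat) : 0 < t -> 0 < u ->
  t <= Jvec lam l u k -> u <= Jvec lam k t l -> k = l /\ t = u.
Proof.
rewrite /Jvec; case_lam l k; case_lam k l => t_gt0 u_gt0 le_tu le_ut;
  have eq_kl : k = l :> nat by lia.
all: by split; [exact: val_inj | lia].
Qed.

End JvecOrder.

Section JsetOrder.
Variables (p n : nat) (lam : 'I_n -> nat).
Hypotheses (p_prime : prime p) (lam_gt0 : forall k, 0 < lam k).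
Hypothesis lam_increasing : forall k l : 'I_n, k < l -> lam k < lam l.

Lemma Jset_subset (i k : 'I_n) (j t : nat) : j <= lam i -> 0 < t <= lam k ->
  (Jset p lam k t \subset Jset p lam i j) = (t <= Jvec lam i j k).
Proof.
move=> le_j_lam /andP [t_gt0 le_t_lam].
rewrite /Jset Rset_subset // => [|l]; last exact: (Jvec_le_lam lam_increasing).
apply/forallP/idP => [/(_ k) | le_t_Jvec l]; first by rewrite /Jvec leqnn.
by apply: (Jvec_le_Jvec lam_increasing); rewrite ?t_gt0.
Qed.

Lemma Jset_inj (k l : 'I_n) (t u : nat) : 0 < t <= lam k -> 0 < u <= lam l ->
  Jset p lam k t = Jset p lam l u -> k = l /\ t = u.
Proof.
move=> /[dup] kt /andP [t_gt0 le_t_lam] /[dup] lu /andP [u_gt0 le_u_lam] eq_J.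
apply: (Jvec_antisym lam_increasing) => //.
  by rewrite -(Jset_subset le_u_lam kt) eq_J.
by rewrite -(Jset_subset le_t_lam lu) eq_J.
Qed.

End JsetOrder.

Lemma sum_ord_range (M a : nat) : \sum_(t < M.+1 | 0 < t <= a) 1 = minn a M.
Proof.
rewrite big_mkcond /=; elim: M => [|M IH]; first by rewrite big_ord1 /=; lia.
by rewrite big_ord_recr /= IH; case: ifP; lia.
Qed.

Theorem mainTheorem18 (p n : nat) (lam : 'I_n -> nat) :
  prime p -> p != 2 ->
  (forall k : 'I_n, (0 < lam k)%N) ->
  (forall k l : 'I_n, (k < l)%N -> (lam k < lam l)%N) ->
  forall (i : 'I_n) (j : nat), (0 < j <= lam i)%N ->
  #|[set S in JG p lam | S \subset Jset p lam i j]| =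
    (\sum_(k < n) Jvec lam i j k)%N.
Proof.
move=> p_prime _ lam_gt0 lam_incr i j /andP [j_gt0 le_j_lam].
set M := \max_(k < n) lam k.
have le_Jvec_lam k : Jvec lam i j k <= lam k.
  exact: Jvec_le_lam lam_incr _ _ _ le_j_lam.
pose P := [set x : 'I_n * 'I_M.+1 | 0 < x.2 <= Jvec lam i j x.1].
have adm_P (x : 'I_n * 'I_M.+1) : x \in P -> 0 < x.2 <= lam x.1.
  by rewrite inE => /andP [-> le_x]; rewrite (leq_trans le_x).
have -> : [set S in JG p lam | S \subset Jset p lam i j] =
    [set Jset p lam x.1 x.2 | x : 'I_n * 'I_M.+1 in P].
  apply/setP => S; rewrite inE; apply/andP/imsetP => [[/bigcupP [k _]] | [x Px ->]].
    move=> /imsetP [t /[!inE] kt ->]; rewrite Jset_subset // => le_t_Jvec.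
    by exists (k, t); rewrite // inE (andP kt).1.
  rewrite Jset_subset //; last exact: adm_P.
  split; last by rewrite inE in Px; case/andP: Px.
  by apply/bigcupP; exists x.1 => //; apply/imsetP; exists x.2; rewrite ?inE ?adm_P.
rewrite card_in_imset => [|[k t] [l u] /adm_P kt /adm_P lu eq_J]; last first.
  by move: (Jset_inj p_prime lam_gt0 lam_incr kt lu eq_J) => /= [-> /val_inj ->].
have -> : #|P| = \sum_(k < n) \sum_(t < M.+1 | 0 < t <= Jvec lam i j k) 1.
  by rewrite pair_big_dep -sum1_card; apply: eq_bigl => x; rewrite inE.
apply: eq_bigr => k _; rewrite sum_ord_range; apply/minn_idPl.
exact: leq_trans (le_Jvec_lam k) (leq_bigmax k).
Qed.
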